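(* Let $f:[0,1]\times\mathbb{R}\to\mathbb{R}$ satisfy: (C(c)) $f$ is continuous on $[0,1]\times\mathbb{R}$ and has a continuous partial derivative $f_x$ with respect to the second variable; (D(f)) there exist positive constants $A,B$ with $A<1$ such that $|f(t,x)|\leqslant A|x|+B$ for all $t\in[0,1]$, $x\in\mathbb{R}$; (D($f_x$)) $\inf_{[0,1]\times\mathbb{R}} f_x>-1$; and let (D(v)) $v:[0,1]\to\mathbb{R}$ be continuous. Let $x^\star$ be the unique solution in $H^2(0,1)\cap H^1_0(0,1)$ of $\ddot{x}(t)=f(t,x(t))+v(t)$, $x(0)=x(1)=0$, and for each $N\in\mathbb{N}$, $N\geqslant2$, let $x_N:\{0,\dots,N\}\to\mathbb{R}$ be the unique solution of $$\Delta^2x(k-1)=\tfrac{1}{N^2}f\left(\tfrac{k}{N},x(k)\right)+\tfrac{1}{N^2}v\left(\tfrac{k}{N}\right),\ k=1,\dots,N-1,\qquad x(0)=x(N)=0.$$ Then $\lim_{N\to\infty}\max_{k\in\{0,\dots,N\}}\left|x^\star\left(\tfrac{k}{N}\right)-x_N(k)\right|=0$.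
   Context: $\Delta x(k-1)=x(k)-x(k-1)$, $\Delta^2x(k-1)=x(k+1)-2x(k)+x(k-1)$. $H^1_0(0,1)$: absolutely continuous functions on $[0,1]$ vanishing at $0$ and $1$ with derivative in $L^2$; $H^2(0,1)$: functions in $H^1(0,1)$ whose derivative is in $H^1(0,1)$. *)

From Stdlib Require Import Reals Lra List.
From Coquelicot Require Import Coquelicot.
Open Scope R_scope.

Definition cont_on_strip (g : R -> R -> R) : Prop :=
  forall t x, 0 <= t <= 1 -> forall eps, 0 < eps -> exists delta, 0 < delta /\
    forall s y, 0 <= s <= 1 -> Rabs (s - t) < delta -> Rabs (y - x) < delta ->
      Rabs (g s y - g t x) < eps.

Definition cont_on_01 (h : R -> R) : Prop :=
  forall t, 0 <= t <= 1 -> forall eps, 0 < eps -> exists delta, 0 < delta /\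
    forall s, 0 <= s <= 1 -> Rabs (s - t) < delta -> Rabs (h s - h t) < eps.

Definition cond_C (f : R -> R -> R) : Prop :=
  cont_on_strip f /\
  exists fx : R -> R -> R,
    (forall t x, 0 <= t <= 1 -> is_derive (fun y => f t y) x (fx t x)) /\
    cont_on_strip fx.

Definition cond_Df (f : R -> R -> R) : Prop :=
  exists A B, 0 < A < 1 /\ 0 < B /\
    forall t x, 0 <= t <= 1 -> Rabs (f t x) <= A * Rabs x + B.

(* (D(f_x)): inf over [0,1] x R of f_x is > -1, i.e. some m > -1 is a lower bound *)
Definition cond_Dfx (f : R -> R -> R) : Prop :=
  exists m, -1 < m /\
    forall t x, 0 <= t <= 1 -> m <= Derive (fun y => f t y) x.

(* x is a solution in H^2(0,1) ∩ H^1_0(0,1) of x'' = f(t,x) + v(t), x(0)=x(1)=0.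
   Since the right-hand side is continuous, such solutions are exactly the
   functions continuous on [0,1], twice differentiable on (0,1) with
   x'' = f(t,x(t)) + v(t) there, vanishing at 0 and 1. *)
Definition bvp_solution (f : R -> R -> R) (v : R -> R) (x : R -> R) : Prop :=
  cont_on_01 x /\ x 0 = 0 /\ x 1 = 0 /\
  (forall t, 0 < t < 1 -> ex_derive x t) /\
  (forall t, 0 < t < 1 ->
     is_derive (Derive x) t (f t (x t) + v t)).

Definition discrete_solution (f : R -> R -> R) (v : R -> R) (N : nat) (x : nat -> R) : Prop :=
  x 0%nat = 0 /\ x N = 0 /\
  forall k : nat, (1 <= k <= N - 1)%nat ->
    x (S k) - 2 * x k + x (k - 1)%nat =
      / (INR N ^ 2) * f (INR k / INR N) (x k) + / (INR N ^ 2) * v (INR k / INR N).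

Definition max_err (xs : R -> R) (N : nat) (x : nat -> R) : R :=
  fold_right Rmax 0
    (map (fun k => Rabs (xs (INR k / INR N) - x k)) (seq 0 (S N))).

(* Let e(k) = x*(k/N) - x_N(k).  By the mean value theorem in x, the error
   satisfies  Δ²e(k-1) = f_x(k/N, ξ_k) e(k) / N² + τ_k,  where the local truncation
   error τ_k = Δ²x*(k) - x*''(k/N) / N² is o(1/N²) uniformly in k by the second
   difference mean value theorem and uniform continuity of x*''.  Multiplying by
   e(k) and summing by parts gives the energy inequality
   (1 + m) Σ (Δe)² <= max|τ| Σ |e(k)|  for the lower bound m > -1 of f_x
   (the Poincaré inequality Σ e² <= N² Σ (Δe)² absorbs the negative part of f_x),
   and the discrete Sobolev inequality e(k)² <= N Σ (Δe)² turns this into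
   (1 + m) max|e| <= N² max|τ| = o(1). *)

From Stdlib Require Import Reals Lra Lia List.
From Coquelicot Require Import Coquelicot.
Open Scope R_scope.

Lemma sum_n_m_succ (a : nat -> R) (n m : nat) :
  (n <= S m)%nat -> sum_n_m a n (S m) = sum_n_m a n m + a (S m) :> R.
Proof. exact (sum_n_Sm a n m). Qed.

Lemma sum_n_m_le_loc (a b : nat -> R) (n m : nat) :
  (forall k, (n <= k <= m)%nat -> a k <= b k) -> sum_n_m a n m <= sum_n_m b n m.
Proof.
  intros Hab. destruct (Nat.le_gt_cases n m) as [Hnm | Hmn].
  - rewrite !sum_n_m_Reals by exact Hnm. apply sum_Rle. intros i Hi. apply Hab. lia.
  - rewrite !sum_n_m_zero by lia. apply Rle_refl.
Qed.

Lemma sum_n_m_nonneg (a : nat -> R) (n m : nat) :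
  (forall k, 0 <= a k) -> 0 <= sum_n_m a n m.
Proof.
  intros Ha. rewrite <- (Rmult_0_r (INR (S m - n))), <- sum_n_m_const.
  apply sum_n_m_le. exact Ha.
Qed.

Lemma sum_n_m_le_r (a : nat -> R) (k m : nat) :
  (forall i, 0 <= a i) -> (k <= m)%nat -> sum_n_m a 1 k <= sum_n_m a 1 m.
Proof.
  intros Ha Hkm. rewrite (sum_n_m_Chasles a 1 k m) by lia.
  pose proof (sum_n_m_nonneg a (S k) m Ha). change (plus ?x ?y) with (x + y). lra.
Qed.

Lemma sum_n_m_telescope (e : nat -> R) (k : nat) :
  e k = e 0%nat + sum_n_m (fun i => e i - e (i - 1)%nat) 1 k.
Proof.
  induction k as [|k IH].
  - rewrite sum_n_m_zero by lia. change (zero : R) with 0. ring.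
  - rewrite sum_n_m_succ by lia. rewrite Nat.sub_1_r, Nat.pred_succ. lra.
Qed.

Lemma sum_n_m_sqr_le (a : nat -> R) (k : nat) :
  (sum_n_m a 1 k) ^ 2 <= INR k * sum_n_m (fun i => a i ^ 2) 1 k.
Proof.
  induction k as [|k IH].
  - rewrite !sum_n_m_zero by lia. change (zero : R) with 0. simpl. lra.
  - rewrite !sum_n_m_succ, S_INR by lia.
    set (A := sum_n_m a 1 k) in *. set (Q := sum_n_m (fun i => a i ^ 2) 1 k) in *.
    set (x := a (S k)).
    assert (HQ : 0 <= Q) by (apply sum_n_m_nonneg; intros; apply pow2_ge_0).
    assert (Hk : 0 <= INR k) by apply pos_INR.
    (* [k (Q + k x^2 - 2 A x) = (k Q - A^2) + (A - k x)^2 >= 0] *)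
    assert (Hcross : 2 * A * x <= Q + INR k * x ^ 2).
    { destruct (Req_dec (INR k) 0) as [Hk0 | Hk0].
      - rewrite Hk0 in IH |- *. assert (A = 0) by nra. subst A. nra.
      - assert (Hpos : 0 < INR k) by lra.
        apply Rmult_le_reg_l with (INR k); [exact Hpos|].
        assert (0 <= (A - INR k * x) ^ 2) by apply pow2_ge_0. nra. }
    nra.
Qed.

Lemma sum_n_m_lin (a b : nat -> R) (alpha beta : R) (n m : nat) :
  sum_n_m (fun k => alpha * a k - beta * b k) n m
  = alpha * sum_n_m a n m - beta * sum_n_m b n m :> R.
Proof.
  assert (Ha : sum_n_m (fun k => alpha * a k) n m = alpha * sum_n_m a n m :> R)
    by apply (sum_n_m_mult_l alpha a).
  assert (Hb : sum_n_m (fun k => - beta * b k) n m = - beta * sum_n_m b n m :> R)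
    by apply (sum_n_m_mult_l (- beta) b).
  assert (Hab : sum_n_m (fun k => alpha * a k + - beta * b k) n m
    = sum_n_m (fun k => alpha * a k) n m + sum_n_m (fun k => - beta * b k) n m :> R)
    by apply (sum_n_m_plus (fun k => alpha * a k) (fun k => - beta * b k)).
  rewrite (sum_n_m_ext _ (fun k => alpha * a k + - beta * b k)) by (intros; simpl; ring).
  rewrite Hab, Ha, Hb. ring.
Qed.

Definition dirichlet_energy (e : nat -> R) (n : nat) : R :=
  sum_n_m (fun k => (e k - e (k - 1)%nat) ^ 2) 1 n.

Lemma dirichlet_energy_ge0 (e : nat -> R) (n : nat) : 0 <= dirichlet_energy e n.
Proof. apply sum_n_m_nonneg. intros; apply pow2_ge_0. Qed.

Lemma summation_by_parts (e : nat -> R) (n : nat) : e 0%nat = 0 ->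
  sum_n_m (fun k => (e (S k) - 2 * e k + e (k - 1)%nat) * e k) 1 n
  = (e (S n) - e n) * e (S n) - dirichlet_energy e (S n) :> R.
Proof.
  intros He0. unfold dirichlet_energy. induction n as [|n IH].
  - rewrite sum_n_m_zero, sum_n_n by lia. change (zero : R) with 0.
    simpl. rewrite He0. ring.
  - rewrite sum_n_m_succ, IH, (sum_n_m_succ _ _ (S n)) by lia.
    replace (S (S n) - 1)%nat with (S n) by lia. replace (S n - 1)%nat with n by lia.
    ring.
Qed.

Lemma discrete_sobolev (e : nat -> R) (n k : nat) : e 0%nat = 0 -> (k <= n)%nat ->
  e k ^ 2 <= INR n * dirichlet_energy e n.
Proof.
  intros He0 Hkn. rewrite (sum_n_m_telescope e k), He0, Rplus_0_l.
  eapply Rle_trans; [apply sum_n_m_sqr_le|].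
  apply Rmult_le_compat.
  - apply pos_INR.
  - apply sum_n_m_nonneg. intros; apply pow2_ge_0.
  - apply le_INR, Hkn.
  - apply sum_n_m_le_r; [intros; apply pow2_ge_0 | exact Hkn].
Qed.

Lemma discrete_poincare (e : nat -> R) (n : nat) : e 0%nat = 0 ->
  sum_n_m (fun k => e k ^ 2) 1 n <= INR n ^ 2 * dirichlet_energy e n.
Proof.
  intros He0.
  apply Rle_trans with (sum_n_m (fun _ => INR n * dirichlet_energy e n) 1 n).
  - apply sum_n_m_le_loc. intros k Hk. apply discrete_sobolev; [exact He0 | lia].
  - rewrite sum_n_m_const, Nat.sub_1_r, Nat.pred_succ. right. ring.
Qed.

Lemma discrete_energy_inequality (e : nat -> R) (n : nat) (m T : R) :
  m <= 0 -> e 0%nat = 0 -> e (S n) = 0 ->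
  (forall k, (1 <= k <= n)%nat ->
     m / INR (S n) ^ 2 * e k ^ 2 - T * Rabs (e k)
     <= (e (S k) - 2 * e k + e (k - 1)%nat) * e k) ->
  (1 + m) * dirichlet_energy e (S n) <= T * sum_n_m (fun k => Rabs (e k)) 1 n.
Proof.
  intros Hm He0 HeN Hstep.
  set (N := INR (S n)) in *. set (D := dirichlet_energy e (S n)).
  assert (HN2 : 0 < N ^ 2) by (unfold N; apply pow_lt, lt_0_INR; lia).
  assert (Hsum := sum_n_m_le_loc _ _ 1 n Hstep). cbv beta in Hsum.
  rewrite summation_by_parts, HeN, Rmult_0_r, Rminus_0_l, sum_n_m_lin in Hsum by exact He0.
  fold D in Hsum.
  assert (Hpoinc : sum_n_m (fun k => e k ^ 2) 1 n <= N ^ 2 * D).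
  { apply Rle_trans with (sum_n_m (fun k => e k ^ 2) 1 (S n)).
    - apply sum_n_m_le_r; [intros; apply pow2_ge_0 | apply Nat.le_succ_diag_r].
    - apply discrete_poincare, He0. }
  assert (Hneg : m / N ^ 2 * (N ^ 2 * D) <= m / N ^ 2 * sum_n_m (fun k => e k ^ 2) 1 n).
  { apply Rmult_le_compat_neg_l; [|exact Hpoinc].
    unfold Rdiv. assert (0 < / N ^ 2) by (apply Rinv_0_lt_compat; exact HN2). nra. }
  replace (m / N ^ 2 * (N ^ 2 * D)) with (m * D) in Hneg by (field; nra).
  lra.
Qed.

Lemma discrete_energy_estimate (e : nat -> R) (n : nat) (m T : R) :
  -1 < m <= 0 -> 0 <= T -> e 0%nat = 0 -> e (S n) = 0 ->
  (forall k, (1 <= k <= n)%nat ->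
     m / INR (S n) ^ 2 * e k ^ 2 - T * Rabs (e k)
     <= (e (S k) - 2 * e k + e (k - 1)%nat) * e k) ->
  forall k, (k <= S n)%nat -> (1 + m) * Rabs (e k) <= T * INR (S n) ^ 2.
Proof.
  intros Hm HT He0 HeN Hstep.
  assert (Henergy := discrete_energy_inequality e n m T (proj2 Hm) He0 HeN Hstep).
  set (N := INR (S n)) in *. set (D := dirichlet_energy e (S n)) in *.
  assert (HN : 1 <= N) by (unfold N; rewrite S_INR; pose proof (pos_INR n); lra).
  assert (HD : 0 <= D) by apply dirichlet_energy_ge0.
  set (s := sqrt (N * D)).
  assert (Hs : forall k, (k <= S n)%nat -> Rabs (e k) <= s).
  { intros k Hk. unfold s. rewrite <- sqrt_Rsqr_abs. apply sqrt_le_1_alt.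
    rewrite Rsqr_pow2. apply discrete_sobolev; assumption. }
  assert (Hs0 : 0 <= s) by apply sqrt_pos.
  assert (Hs2 : s * s = N * D) by (apply sqrt_sqrt; nra).
  assert (Hl1 : sum_n_m (fun k => Rabs (e k)) 1 n <= N * s).
  { apply Rle_trans with (sum_n_m (fun _ => s) 1 n).
    - apply sum_n_m_le_loc. intros k Hk. apply Hs. lia.
    - rewrite sum_n_m_const, Nat.sub_1_r, Nat.pred_succ.
      apply Rmult_le_compat_r; [exact Hs0 | unfold N; apply le_INR; lia]. }
  assert (T * sum_n_m (fun k => Rabs (e k)) 1 n <= T * (N * s))
    by (apply Rmult_le_compat_l; assumption).
  assert (Hkey : (1 + m) * s <= T * N ^ 2).
  { destruct (Req_dec s 0) as [Hz | Hz].
    - rewrite Hz. nra.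
    - apply Rmult_le_reg_r with s; [lra|]. nra. }
  intros k Hk. specialize (Hs k Hk). nra.
Qed.

Lemma discrete_stability (n : nat) (F : nat -> R -> R) (y x : nat -> R) (m T : R) :
  -1 < m <= 0 -> 0 <= T ->
  (forall k a b, (1 <= k <= n)%nat -> m * (a - b) ^ 2 <= (F k a - F k b) * (a - b)) ->
  y 0%nat = x 0%nat -> y (S n) = x (S n) ->
  (forall k, (1 <= k <= n)%nat ->
     x (S k) - 2 * x k + x (k - 1)%nat = F k (x k) / INR (S n) ^ 2) ->
  (forall k, (1 <= k <= n)%nat ->
     Rabs (y (S k) - 2 * y k + y (k - 1)%nat - F k (y k) / INR (S n) ^ 2) <= T) ->
  forall k, (k <= S n)%nat -> (1 + m) * Rabs (y k - x k) <= T * INR (S n) ^ 2.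
Proof.
  intros Hm HT HF H0 HN Hx Hy.
  apply (discrete_energy_estimate (fun k => y k - x k)); try assumption; [lra | lra |].
  intros k Hk. cbv beta.
  set (N := INR (S n)) in *.
  assert (HN2 : 0 < N ^ 2) by (unfold N; apply pow_lt, lt_0_INR; lia).
  set (tau := y (S k) - 2 * y k + y (k - 1)%nat - F k (y k) / N ^ 2).
  set (e := y k - x k).
  assert (Htau : - (T * Rabs e) <= tau * e).
  { assert (Rabs (tau * e) <= T * Rabs e).
    { rewrite Rabs_mult. apply Rmult_le_compat_r; [apply Rabs_pos | exact (Hy k Hk)]. }
    pose proof (Rabs_maj2 (tau * e)). lra. }
  assert (Hquad : m / N ^ 2 * e ^ 2 <= (F k (y k) - F k (x k)) / N ^ 2 * e).
  { unfold Rdiv. rewrite (Rmult_comm m), (Rmult_comm (F k (y k) - F k (x k))), !Rmult_assoc.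
    apply Rmult_le_compat_l; [left; apply Rinv_0_lt_compat, HN2 | exact (HF k _ _ Hk)]. }
  replace (y (S k) - x (S k) - 2 * e + (y (k - 1)%nat - x (k - 1)%nat))
    with (tau + (F k (y k) - F k (x k)) / N ^ 2)
    by (unfold tau, e; pose proof (Hx k Hk); lra).
  lra.
Qed.

(* [cont_on_01] is continuity relative to [0, 1]; composing with [clamp01] gives a
   function continuous on all of R, the setting of Stdlib's Heine and MVT theorems. *)
Definition clamp01 (s : R) : R := Rmax 0 (Rmin 1 s).

Lemma clamp01_in s : 0 <= clamp01 s <= 1.
Proof. unfold clamp01, Rmax, Rmin; repeat destruct Rle_dec; lra. Qed.

Lemma clamp01_id s : 0 <= s <= 1 -> clamp01 s = s.
Proof. unfold clamp01, Rmax, Rmin; repeat destruct Rle_dec; lra. Qed.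

Lemma clamp01_lipschitz s t : Rabs (clamp01 s - clamp01 t) <= Rabs (s - t).
Proof.
  unfold clamp01, Rmax, Rmin; repeat destruct Rle_dec; unfold Rabs;
    repeat destruct Rcase_abs; lra.
Qed.

Lemma continuity_pt_clamp01 (h : R -> R) : cont_on_01 h ->
  forall s, continuity_pt (fun u => h (clamp01 u)) s.
Proof.
  intros Hh s eps Heps.
  destruct (Hh (clamp01 s) (clamp01_in s) eps Heps) as [d [Hd Hc]].
  exists d. split; [exact Hd|]. intros u [_ Hu]. simpl in *. unfold R_dist in *.
  apply Hc; [apply clamp01_in|]. pose proof (clamp01_lipschitz u s). lra.
Qed.

Lemma cont_on_01_uniform (h : R -> R) : cont_on_01 h ->
  forall eps, 0 < eps -> exists delta, 0 < delta /\
    forall s t, 0 <= s <= 1 -> 0 <= t <= 1 -> Rabs (s - t) < delta ->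
      Rabs (h s - h t) < eps.
Proof.
  intros Hh eps Heps.
  destruct (Heine (fun u => h (clamp01 u)) (fun u => 0 <= u <= 1) (compact_P3 0 1)
              (fun u _ => continuity_pt_clamp01 h Hh u) (mkposreal eps Heps)) as [d Hd].
  exists d. split; [apply cond_pos|]. intros s t Hs Ht Hst.
  specialize (Hd s t Hs Ht Hst). simpl in Hd. rewrite !clamp01_id in Hd; assumption.
Qed.

Lemma cont_on_01_plus (h k : R -> R) : cont_on_01 h -> cont_on_01 k ->
  cont_on_01 (fun t => h t + k t).
Proof.
  intros Hh Hk t Ht eps Heps.
  destruct (Hh t Ht (eps / 2)) as [d1 [Hd1 H1]]; [lra|].
  destruct (Hk t Ht (eps / 2)) as [d2 [Hd2 H2]]; [lra|].
  exists (Rmin d1 d2). split; [apply Rmin_pos; assumption|]. intros s Hs Hst.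
  assert (H1s := H1 s Hs (Rlt_le_trans _ _ _ Hst (Rmin_l d1 d2))).
  assert (H2s := H2 s Hs (Rlt_le_trans _ _ _ Hst (Rmin_r d1 d2))).
  replace (h s + k s - (h t + k t)) with ((h s - h t) + (k s - k t)) by ring.
  eapply Rle_lt_trans; [apply Rabs_triang | lra].
Qed.

Lemma cont_on_strip_comp (f : R -> R -> R) (x : R -> R) : cont_on_strip f -> cont_on_01 x ->
  cont_on_01 (fun t => f t (x t)).
Proof.
  intros Hf Hx t Ht eps Heps.
  destruct (Hf t (x t) Ht eps Heps) as [d1 [Hd1 H1]].
  destruct (Hx t Ht d1 Hd1) as [d2 [Hd2 H2]].
  exists (Rmin d1 d2). split; [apply Rmin_pos; assumption|]. intros s Hs Hst.
  apply H1; [exact Hs | |].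
  - exact (Rlt_le_trans _ _ _ Hst (Rmin_l d1 d2)).
  - exact (H2 s Hs (Rlt_le_trans _ _ _ Hst (Rmin_r d1 d2))).
Qed.

Lemma continuity_pt_of_is_derive (F : R -> R) x l : is_derive F x l -> continuity_pt F x.
Proof.
  intros H. apply continuity_pt_filterlim. exact (ex_derive_continuous F x (ex_intro _ l H)).
Qed.

Lemma Derive_ge_mul_sqr (F : R -> R) (m a b : R) :
  (forall x, ex_derive F x) -> (forall x, m <= Derive F x) ->
  m * (a - b) ^ 2 <= (F a - F b) * (a - b).
Proof.
  intros HF Hm.
  destruct (MVT_gen F b a (Derive F)) as [c [_ Hc]].
  - intros x _. apply Derive_correct, HF.
  - intros x _. apply (continuity_pt_of_is_derive _ _ _ (Derive_correct _ _ (HF x))).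
  - rewrite Hc.
    assert (0 <= (Derive F c - m) * (a - b) ^ 2).
    { apply Rmult_le_pos; [specialize (Hm c); lra | apply pow2_ge_0]. }
    nra.
Qed.

Lemma is_derive_clamp01 (y : R -> R) (z : R) : 0 < z < 1 -> ex_derive y z ->
  is_derive (fun u => y (clamp01 u)) z (Derive y z).
Proof.
  intros Hz Hd. apply is_derive_ext_loc with y; [|apply Derive_correct, Hd].
  apply (locally_interval _ z 0 1); simpl; try lra.
  intros u Hu0 Hu1. rewrite clamp01_id; [reflexivity | simpl in *; lra].
Qed.

Lemma is_derive_reflection_sum (y : R -> R) (t s a b : R) :
  is_derive y (t + s) a -> is_derive y (t - s) b ->
  is_derive (fun u => y (t + u) + y (t - u)) s (a - b).
Proof.
  intros Ha Hb.
  assert (Ea : ex_derive y (t + s)) by (exists a; exact Ha).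
  assert (Eb : ex_derive y (t - s)) by (exists b; exact Hb).
  auto_derive; [split; [exact Ea | split; [exact Eb | exact I]]|].
  change (fun x => y x) with y. replace (t + - s) with (t - s) by ring.
  rewrite (is_derive_unique _ _ _ Ha), (is_derive_unique _ _ _ Hb). ring.
Qed.

Lemma continuity_pt_reflection_sum (y : R -> R) (t s : R) :
  (forall z, continuity_pt y z) -> continuity_pt (fun u => y (t + u) + y (t - u)) s.
Proof.
  intros Hy. apply continuity_pt_filterlim.
  apply (continuous_plus (fun u => y (t + u)) (fun u => y (t - u))).
  - apply (continuous_comp (fun u => t + u) y).
    + apply (continuous_plus (fun _ => t) (fun u => u));
        [apply continuous_const | apply continuous_id].
    + apply continuity_pt_filterlim, Hy.
  - apply (continuous_comp (fun u => t - u) y).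
    + apply (continuous_minus (fun _ => t) (fun u => u));
        [apply continuous_const | apply continuous_id].
    + apply continuity_pt_filterlim, Hy.
Qed.

Lemma second_difference_mvt (y g : R -> R) (t h : R) :
  cont_on_01 y -> (forall s, 0 < s < 1 -> ex_derive y s) ->
  (forall s, 0 < s < 1 -> is_derive (Derive y) s (g s)) ->
  0 < h -> 0 <= t - h -> t + h <= 1 ->
  exists xi, t - h < xi < t + h /\ y (t + h) - 2 * y t + y (t - h) = h ^ 2 * g xi.
Proof.
  intros Hc Hd Hdd Hh Hlo Hhi.
  set (phi := fun s => y (clamp01 (t + s)) + y (clamp01 (t - s))).
  assert (Hphi : forall s, 0 < s < h -> is_derive phi s (Derive y (t + s) - Derive y (t - s))).
  { intros s Hs. apply (is_derive_reflection_sum (fun u => y (clamp01 u)));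
      apply is_derive_clamp01; try lra; apply Hd; lra. }
  assert (Hphic : forall s, continuity_pt phi s).
  { intros s. apply (continuity_pt_reflection_sum (fun u => y (clamp01 u))).
    apply continuity_pt_clamp01, Hc. }
  assert (Hsq : forall s, is_derive (fun u : R => u ^ 2) s (2 * s))
    by (intros s; auto_derive; [exact I | ring]).
  (* Cauchy's mean value theorem for phi and s^2 on [0, h], then Lagrange's for y'. *)
  destruct (MVT phi (fun u => u ^ 2) 0 h
              (fun c P => ex_derive_Reals_0 phi c (ex_intro _ _ (Hphi c P)))
              (fun c _ => ex_derive_Reals_0 _ c (ex_intro _ _ (Hsq c)))
              Hh (fun c _ => Hphic c) (fun c _ => continuity_pt_of_is_derive _ _ _ (Hsq c)))
    as [c [Pc Hcauchy]].
  rewrite !Derive_Reals, (is_derive_unique _ _ _ (Hphi c Pc)), (is_derive_unique _ _ _ (Hsq c))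
    in Hcauchy.
  assert (Hends : phi h - phi 0 = y (t + h) - 2 * y t + y (t - h)).
  { unfold phi. rewrite Rplus_0_r, Rminus_0_r, !clamp01_id by lra. ring. }
  destruct (MVT_gen (Derive y) (t - c) (t + c) g) as [xi [Hxi Hmvt]].
  - intros z Hz. rewrite Rmin_left, Rmax_right in Hz by lra. apply Hdd. lra.
  - intros z Hz. rewrite Rmin_left, Rmax_right in Hz by lra.
    exact (continuity_pt_of_is_derive _ _ _ (Hdd z ltac:(lra))).
  - rewrite Rmin_left, Rmax_right in Hxi by lra.
    exists xi. split; [lra|].
    apply Rmult_eq_reg_r with (2 * c); [|lra].
    rewrite <- Hends, <- Hcauchy, Hmvt. ring.
Qed.

Lemma second_difference_consistency (y g : R -> R) :
  cont_on_01 y -> (forall s, 0 < s < 1 -> ex_derive y s) ->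
  (forall s, 0 < s < 1 -> is_derive (Derive y) s (g s)) -> cont_on_01 g ->
  forall eps, 0 < eps -> exists N0 : nat, forall N k : nat,
    (N0 <= N)%nat -> (1 <= k)%nat -> (S k <= N)%nat ->
    Rabs (y (INR (S k) / INR N) - 2 * y (INR k / INR N) + y (INR (k - 1) / INR N)
          - g (INR k / INR N) / INR N ^ 2) <= eps / INR N ^ 2.
Proof.
  intros Hc Hd Hdd Hg eps Heps.
  destruct (cont_on_01_uniform g Hg eps Heps) as [delta [Hdelta Hunif]].
  destruct (archimed_cor1 delta Hdelta) as [N0 [HN0 HN0pos]].
  exists N0. intros N k HN Hk HkN.
  assert (HN0N : 0 < INR N0 <= INR N) by (split; [apply lt_0_INR | apply le_INR]; lia).
  assert (Hk1 : 1 <= INR k) by (apply (le_INR 1); exact Hk).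
  assert (HkN' : INR k + 1 <= INR N) by (rewrite <- S_INR; apply le_INR; exact HkN).
  set (h := / INR N). set (t := INR k / INR N).
  assert (Hh : 0 < h) by (apply Rinv_0_lt_compat; lra).
  assert (Hhd : h < delta)
    by (apply Rle_lt_trans with (/ INR N0); [apply Rinv_le_contravar; lra | exact HN0]).
  replace (INR (S k) / INR N) with (t + h) by (unfold t, h; rewrite S_INR; field; lra).
  replace (INR (k - 1) / INR N) with (t - h)
    by (unfold t, h; rewrite minus_INR by exact Hk; simpl INR; field; lra).
  assert (Hlo : 0 <= t - h).
  { replace (t - h) with ((INR k - 1) / INR N) by (unfold t, h; field; lra).
    apply Rdiv_le_0_compat; lra. }
  assert (Hhi : t + h <= 1).
  { replace (t + h) with ((INR k + 1) / INR N) by (unfold t, h; field; lra).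
    apply Rmult_le_reg_r with (INR N); [lra|]. field_simplify; lra. }
  destruct (second_difference_mvt y g t h Hc Hd Hdd Hh Hlo Hhi) as [xi [Hxi Heq]].
  rewrite Heq.
  replace (h ^ 2 * g xi - g t / INR N ^ 2) with (h ^ 2 * (g xi - g t))
    by (unfold h; field; lra).
  replace (eps / INR N ^ 2) with (h ^ 2 * eps) by (unfold h; field; lra).
  rewrite Rabs_mult, (Rabs_pos_eq (h ^ 2)) by (apply pow2_ge_0).
  apply Rmult_le_compat_l; [apply pow2_ge_0|]. left. apply Hunif; try lra.
  apply Rabs_def1; lra.
Qed.

Lemma fold_right_Rmax_nonneg (l : list R) : 0 <= fold_right Rmax 0 l.
Proof.
  induction l as [|r l IH]; simpl; [lra | eapply Rle_trans; [exact IH | apply Rmax_r]].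
Qed.

Lemma fold_right_Rmax_le (l : list R) (b : R) :
  0 <= b -> (forall r, In r l -> r <= b) -> fold_right Rmax 0 l <= b.
Proof.
  intros Hb. induction l as [|r l IH]; simpl; intros Hl; [exact Hb|].
  apply Rmax_lub; [apply Hl; left; reflexivity|].
  apply IH. intros r' Hr'. apply Hl. right. exact Hr'.
Qed.

Lemma max_err_le (xs : R -> R) (N : nat) (x : nat -> R) (b : R) : 0 <= b ->
  (forall k, (k <= N)%nat -> Rabs (xs (INR k / INR N) - x k) <= b) -> max_err xs N x <= b.
Proof.
  intros Hb Hk. apply fold_right_Rmax_le; [exact Hb|]. intros r Hr.
  apply in_map_iff in Hr. destruct Hr as [k [<- Hin]]. apply in_seq in Hin. apply Hk. lia.
Qed.

Lemma grid_point_in_01 (k N : nat) : (k <= N)%nat -> 0 <= INR k / INR N <= 1.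
Proof.
  intros HkN. destruct (Nat.eq_0_gt_0_cases N) as [-> | HN].
  - replace k with 0%nat by lia. simpl. unfold Rdiv. rewrite Rmult_0_l. lra.
  - apply le_INR in HkN. apply lt_0_INR in HN. pose proof (pos_INR k). split.
    + apply Rdiv_le_0_compat; assumption.
    + apply Rmult_le_reg_r with (INR N); [exact HN|]. field_simplify; lra.
Qed.

Lemma discrete_solution_error_le (f : R -> R -> R) (v xs : R -> R) (x : nat -> R)
  (n : nat) (m T : R) :
  -1 < m <= 0 -> 0 <= T ->
  (forall t z, 0 <= t <= 1 -> ex_derive (fun y => f t y) z) ->
  (forall t z, 0 <= t <= 1 -> m <= Derive (fun y => f t y) z) ->
  xs 0 = 0 -> xs 1 = 0 -> discrete_solution f v (S n) x ->
  (forall k, (1 <= k <= n)%nat ->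
     Rabs (xs (INR (S k) / INR (S n)) - 2 * xs (INR k / INR (S n))
           + xs (INR (k - 1) / INR (S n))
           - (f (INR k / INR (S n)) (xs (INR k / INR (S n))) + v (INR k / INR (S n)))
             / INR (S n) ^ 2) <= T) ->
  forall k, (k <= S n)%nat ->
    (1 + m) * Rabs (xs (INR k / INR (S n)) - x k) <= T * INR (S n) ^ 2.
Proof.
  intros Hm HT Hfd Hfm Hxs0 Hxs1 [Hx0 [HxN Hx]] Hres.
  assert (HN : 0 < INR (S n)) by (apply lt_0_INR; lia).
  apply (discrete_stability n (fun k a => f (INR k / INR (S n)) a + v (INR k / INR (S n))));
    try assumption.
  - intros k a b Hk. set (t := INR k / INR (S n)).
    assert (Ht : 0 <= t <= 1) by (apply grid_point_in_01; lia).
    replace (f t a + v t - (f t b + v t)) with (f t a - f t b) by ring.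
    apply Derive_ge_mul_sqr; intros z; [apply Hfd | apply Hfm]; exact Ht.
  - simpl INR. unfold Rdiv. rewrite Rmult_0_l, Hxs0, Hx0. reflexivity.
  - unfold Rdiv. rewrite Rinv_r, Hxs1, HxN by lra. reflexivity.
  - intros k Hk. rewrite (Hx k) by lia. field. lra.
Qed.

Theorem theorem7 (f : R -> R -> R) (v : R -> R) (xstar : R -> R)
  (xN : nat -> nat -> R) :
  cond_C f -> cond_Df f -> cond_Dfx f -> cont_on_01 v ->
  bvp_solution f v xstar ->
  (forall N : nat, (2 <= N)%nat -> discrete_solution f v N (xN N)) ->
  is_lim_seq (fun N => max_err xstar N (xN N)) 0.
Proof.
  (* (D(f)) only serves the existence and uniqueness of xstar and xN, assumed here. *)
  intros [Hfc [fx [Hfx _]]] _ [m [Hm Hfm]] Hv [Hxc [Hx0 [Hx1 [Hxd Hxdd]]]] Hdisc.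
  set (m0 := Rmin m 0).
  assert (Hm0 : -1 < m0 <= 0) by (unfold m0, Rmin; destruct Rle_dec; lra).
  set (g := fun t => f t (xstar t) + v t).
  assert (Hg : cont_on_01 g)
    by (apply cont_on_01_plus; [apply cont_on_strip_comp|]; assumption).
  apply is_lim_seq_spec. intros eps. pose proof (cond_pos eps) as Heps.
  destruct (second_difference_consistency xstar g Hxc Hxd Hxdd Hg (eps * (1 + m0) / 2))
    as [N0 HN0]; [nra|].
  exists (N0 + 2)%nat. intros N HN. destruct N as [|n]; [lia|].
  assert (HNpos : 0 < INR (S n)) by (apply lt_0_INR; lia).
  rewrite Rminus_0_r, Rabs_pos_eq by apply fold_right_Rmax_nonneg.
  apply Rle_lt_trans with (eps / 2); [|lra].
  apply max_err_le; [lra|]. intros k Hk.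
  apply Rmult_le_reg_l with (1 + m0); [lra|].
  replace ((1 + m0) * (eps / 2)) with (eps * (1 + m0) / 2 / INR (S n) ^ 2 * INR (S n) ^ 2)
    by (field; lra).
  apply (discrete_solution_error_le f v xstar (xN (S n)) n m0); try assumption.
  - apply Rdiv_le_0_compat; [nra | apply pow_lt, HNpos].
  - intros t z Ht. exists (fx t z). apply Hfx, Ht.
  - intros t z Ht. apply Rle_trans with m; [apply Rmin_l | apply Hfm, Ht].
  - apply Hdisc. lia.
  - intros j Hj. apply HN0; lia.
Qed.
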